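(* For the GND game induced by the Shapley cost sharing mechanism, the function $$\Phi(p)=\sum_{e\in p}\sum_{i\in S_e} f_{i,e}\big(S_e^i(\psi_e)\cup\{i\}\big)$$ (where $S_e=\{i: e\in p_i\}$, $\psi_e$ is an arbitrary permutation of $S_e$, $S_e^i(\psi_e)$ is the set of players preceding $i$ in $\psi_e$, and $e \in p$ means $e\in\bigcup_i p_i$) satisfies $$\frac{1}{\lceil\max_j\alpha_j\rceil}\cdot C(p)\le\Phi(p)\le\mathcal{H}_N\cdot C(p)$$ for every strategy profile $p$, where $\mathcal{H}_N=\sum_{k=1}^N 1/k$.
   Context: GND instance: finite resource set $E$; players $i \in [N]$ with strategy collections $P_i \subseteq 2^E$ and weight vectors $w_i \in \mathbb{Z}_{\geq 1}^E$; constants $q\in\mathbb{Z}_{\ge1}$, $\alpha_1,\dots,\alpha_q > 1$; for each $e$, $\sigma_e \geq 0$, $\xi_{e,j} \geq 0$ (at least one positive), and $F_e(0)=0$, $F_e(l)=\sigma_e+\sum_j \xi_{e,j} l^{\alpha_j}$ for $l>0$. Profile $p=(p_1,\dots,p_N)$, $p_i\in P_i$; load $l_e^p=\sum_{i: e\in p_i} w_i(e)$; total cost $C(p)=\sum_e F_e(l_e^p)$. The Shapley cost share of $i\in X$ on $e$ when $X$ is the set of users of $e$ is $f_{i,e}(X)=\mathbb{E}\big[F_e\big(\sum_{i'\in X^i(\pi)}w_{i'}(e)+w_i(e)\big)-F_e\big(\sum_{i'\in X^i(\pi)}w_{i'}(e)\big)\big]$, where $\pi$ is a uniformly random permutation of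 $X$ and $X^i(\pi)$ is the set of players preceding $i$ in $\pi$. *)

From HB Require Import structures.
From mathcomp Require Import all_boot all_order all_algebra all_fingroup.
From mathcomp Require Import all_classical all_reals all_analysis.
Set Implicit Arguments. Unset Strict Implicit. Unset Printing Implicit Defensive.
Import Order.TTheory GRing.Theory Num.Theory.
Local Open Scope ring_scope.

Section GND.
Variables (R : realType) (E : finType) (N q : nat).
Variables (w : 'I_N -> E -> nat) (alpha : 'I_q -> R)
          (sigma : E -> R) (xi : E -> 'I_q -> R).

Definition Fcost (e : E) (l : nat) : R :=
  if l == 0%N then 0 else sigma e + \sum_(j < q) xi e j * (l%:R `^ alpha j).

Definition load_of (e : E) (Y : {set 'I_N}) : nat := \sum_(j in Y) w j e.

Definition preceding (s : seq 'I_N) (i : 'I_N) : {set 'I_N} :=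
  [set j in take (index i s) s].

Definition shapley (e : E) (i : 'I_N) (X : {set 'I_N}) : R :=
  (size (permutations (enum X)))%:R^-1 *
  \sum_(s <- permutations (enum X))
     (Fcost e (load_of e (preceding s i) + w i e)
      - Fcost e (load_of e (preceding s i))).

Definition users (p : 'I_N -> {set E}) (e : E) : {set 'I_N} :=
  [set i | e \in p i].

Definition load (p : 'I_N -> {set E}) (e : E) : nat := load_of e (users p e).

Definition total_cost (p : 'I_N -> {set E}) : R :=
  \sum_(e : E) Fcost e (load p e).

Definition Phi (p : 'I_N -> {set E}) (psi : E -> seq 'I_N) : R :=
  \sum_(e in \bigcup_(i < N) p i)
    \sum_(i in users p e) shapley e i (preceding (psi e) i :|: [set i]).

End GND.

Definition harmonic_number (R : realType) (n : nat) : R := \sum_(k < n) (k.+1%:R)^-1.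

From HB Require Import structures.
From mathcomp Require Import all_boot all_order all_algebra all_fingroup.
From mathcomp Require Import all_classical all_reals all_analysis.
From mathcomp Require Import ring lra.
Set Implicit Arguments. Unset Strict Implicit. Unset Printing Implicit Defensive.
Import Order.TTheory GRing.Theory Num.Theory.
Local Open Scope ring_scope.

(* For a set function v with v(∅) = 0, the Shapley value of i in Y is the
   marginal Pot(Y) - Pot(Y∖i) of the Hart–Mas-Colell potential, given by
   |Y| Pot(Y) = v(Y) + Σ_{j∈Y} Pot(Y∖j).  Along any ordering of the users of a
   resource the Shapley shares in Φ therefore telescope, and Φ = Σ_e Pot_e(S_e).
   The recursion gives Pot ≤ H_|Y| v for v decreasing under removal of a
   player, and Pot ≥ v / d as soon as |Y| v(Y) ≤ d v(Y) + Σ_j v(Y∖j).  For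
   F_e this last inequality with d = ⌈max α⌉ follows from the tangent-line bound
   (L - w_j)^α ≥ L^α - α w_j L^(α-1), summed over the users j (Σ_j w_j = L). *)

Lemma cardsD1_eqS (T : finType) (A : {set T}) x n :
  x \in A -> #|A| = n.+1 -> #|A :\ x| = n.
Proof. by move=> xA; rewrite (cardsD1 x) xA add1n => -[]. Qed.

Lemma perm_enum_rcons (T : finType) (Y : {set T}) (s : seq T) j :
  perm_eq (rcons s j) (enum Y) = (j \in Y) && perm_eq s (enum (Y :\ j)).
Proof.
have [jY|jNY] /= := boolP (j \in Y); last first.
  by apply: contraNF jNY => /perm_mem/(_ j); rewrite mem_rcons mem_head mem_enum.
have enumY : perm_eq (enum Y) (j :: enum (Y :\ j)).
  apply: uniq_perm; rewrite /= ?enum_uniq ?mem_enum ?setD11 // => x.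
  by rewrite in_cons !mem_enum in_setD1; case: eqP => // ->.
by rewrite (permPr enumY) perm_rcons perm_cons.
Qed.

Lemma sum_permutations_rcons (T : finType) (V : nmodType) (Y : {set T})
    (G : seq T -> V) : (0 < #|Y|)%N ->
  \sum_(s <- permutations (enum Y)) G s =
  \sum_(j in Y) \sum_(s <- permutations (enum (Y :\ j))) G (rcons s j).
Proof.
move=> Y_gt0; rewrite -big_enum /= -(big_allpairs_dep (h := fun j s => rcons s j)).
apply/perm_big/uniq_perm; first exact: permutations_uniq.
  apply: allpairs_uniq_dep => [||[a s] [b t] _ _ /= /rcons_inj [-> ->]] //.
    exact: enum_uniq.
  by move=> x _; exact: permutations_uniq.
case/lastP => [|s j]; rewrite mem_permutations.
  apply/idP/allpairsPdep => [/perm_size|[k [t [_ _]]]]; last by case: t.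
  by rewrite -cardE => /esym Y_eq0; rewrite Y_eq0 in Y_gt0.
rewrite perm_enum_rcons; apply/andP/allpairsPdep => [[jY sY]|[k [t [kY tY]]]].
  by exists j, s; rewrite mem_enum mem_permutations.
by case/rcons_inj=> -> ->; rewrite -mem_enum -mem_permutations.
Qed.

Lemma size_permutations_enum (T : finType) (X : {set T}) :
  size (permutations (enum X)) = (#|X|)`!.
Proof. by rewrite size_permutations ?enum_uniq // -cardE. Qed.

Lemma preceding_rcons_last N (s : seq 'I_N) x : x \notin s ->
  preceding (rcons s x) x = [set y in s].
Proof.
move=> xNs; rewrite /preceding -cats1 index_cat (negbTE xNs) /= eqxx addn0.
by rewrite take_size_cat.
Qed.

Lemma preceding_rcons N (s : seq 'I_N) x i : i \in s ->
  preceding (rcons s x) i = preceding s i.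
Proof.
by move=> si; rewrite /preceding -cats1 index_cat si takel_cat // index_size.
Qed.

Lemma harmonic_numberS (R : realType) n :
  harmonic_number R n.+1 = harmonic_number R n + n.+1%:R^-1.
Proof. by rewrite /harmonic_number big_ord_recr. Qed.

Lemma harmonic_number_ge0 (R : realType) n : 0 <= harmonic_number R n.
Proof. by apply: sumr_ge0 => k _; rewrite invr_ge0. Qed.

Lemma harmonic_number_le (R : realType) m n :
  (m <= n)%N -> harmonic_number R m <= harmonic_number R n.
Proof.
move=> mn; rewrite /harmonic_number (big_ord_widen n (fun k => k.+1%:R^-1) mn).
by rewrite big_mkcond /=; apply: ler_sum => k _; case: ifP; rewrite // invr_ge0.
Qed.

Section ShapleyPotential.
Variables (R : realType) (N : nat).
Variables (v : {set 'I_N} -> R) (m : 'I_N -> {set 'I_N} -> R).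
Implicit Types (X Y : {set 'I_N}) (i j : 'I_N).
Hypothesis v_set0 : v finset.set0 = 0.
Hypothesis m_marginal : forall i Y, i \in Y -> m i (Y :\ i) = v Y - v (Y :\ i).

Definition shapley_value (i : 'I_N) (X : {set 'I_N}) : R :=
  (size (permutations (enum X)))%:R^-1 *
  \sum_(s <- permutations (enum X)) m i (preceding s i).

Fixpoint potential_rec (n : nat) (Y : {set 'I_N}) : R :=
  if n is n'.+1 then #|Y|%:R^-1 * (v Y + \sum_(j in Y) potential_rec n' (Y :\ j))
  else 0.

Definition potential (Y : {set 'I_N}) : R := potential_rec #|Y| Y.

Lemma potential_set0 : potential finset.set0 = 0.
Proof. by rewrite /potential cards0. Qed.

Lemma potentialE Y :
  #|Y|%:R * potential Y = v Y + \sum_(j in Y) potential (Y :\ j).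
Proof.
rewrite /potential; case cardY: #|Y| => [|n] /=.
  move/eqP: cardY; rewrite cards_eq0 => /eqP ->.
  by rewrite big_set0 v_set0 mul0r addr0.
rewrite cardY mulrA divff ?pnatr_eq0 // mul1r.
by congr (_ + _); apply: eq_bigr => j jY; rewrite (cardsD1_eqS jY cardY).
Qed.

Lemma shapley_valueE i Y : i \in Y ->
  #|Y|%:R * shapley_value i Y =
  v Y - v (Y :\ i) + \sum_(j in Y :\ i) shapley_value i (Y :\ j).
Proof.
move=> iY; have [n cardY] : exists n, #|Y| = n.+1.
  by exists #|Y :\ i|; rewrite (cardsD1 i) iY.
have cardD1 j : j \in Y -> #|Y :\ j| = n by move/cardsD1_eqS; apply.
have fact_neq0 : n`!%:R != 0 :> R by rewrite pnatr_eq0 -lt0n fact_gt0.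
have last_i : \sum_(s <- permutations (enum (Y :\ i))) m i (preceding (rcons s i) i)
    = m i (Y :\ i) *+ n`!.
  rewrite -(cardD1 i iY) -size_permutations_enum -iter_addr_0 -count_predT.
  rewrite -big_const_seq; apply: eq_big_seq => s; rewrite mem_permutations => sY.
  rewrite preceding_rcons_last ?(perm_mem sY) ?mem_enum ?setD11 //.
  by congr (m i _); apply/setP => x; rewrite inE (perm_mem sY) mem_enum.
have last_j j : j \in Y :\ i ->
    \sum_(s <- permutations (enum (Y :\ j))) m i (preceding (rcons s j) i)
    = shapley_value i (Y :\ j) *+ n`!.
  case/setD1P => ji jY; rewrite /shapley_value size_permutations_enum cardD1 //.
  rewrite -(mulr_natl (_ * _)) mulVKf //; apply: eq_big_seq => s.
  rewrite mem_permutations => sY; rewrite preceding_rcons //.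
  by rewrite (perm_mem sY) mem_enum in_setD1 eq_sym ji.
rewrite {1}/shapley_value sum_permutations_rcons ?cardY //.
rewrite size_permutations_enum cardY (big_setD1 i iY) /= last_i (eq_bigr _ last_j).
rewrite m_marginal // sumrMnl -mulrnDl factS natrM -mulr_natr.
by field; rewrite fact_neq0 addrC natr1 pnatr_eq0.
Qed.

Lemma potentialD1 i Y : i \in Y ->
  potential Y - potential (Y :\ i) = shapley_value i Y.
Proof.
move cardY: #|Y| => n; elim: n Y i cardY => [|n IH] Y i cardY iY.
  by rewrite (cardsD1 i) iY in cardY.
have sumD1 : \sum_(j in Y :\ i) potential (Y :\ j) =
    \sum_(j in Y :\ i) potential (Y :\ i :\ j)
    + \sum_(j in Y :\ i) shapley_value i (Y :\ j).
  rewrite -big_split; apply: eq_bigr => j /setD1P [ji jY] /=.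
  rewrite -(IH (Y :\ j) i (cardsD1_eqS jY cardY)) ?in_setD1 1?eq_sym ?ji //.
  suff -> : Y :\ j :\ i = Y :\ i :\ j by rewrite addrC subrK.
  by apply/setP => x; rewrite !inE andbCA.
have := potentialE Y; have := potentialE (Y :\ i); have := shapley_valueE iY.
rewrite (big_setD1 i iY) /= sumD1 cardY (cardsD1_eqS iY cardY) => recS recQ recP.
apply: (@mulfI _ n.+1%:R); first by rewrite pnatr_eq0.
by rewrite mulrBr recP recS mulrSr mulrDl mul1r recQ; lra.
Qed.

Lemma sum_shapley_value_preceding (s : seq 'I_N) : uniq s ->
  \sum_(i <- s) shapley_value i (preceding s i :|: [set i]) = potential [set x in s].
Proof.
elim/last_ind: s => [|s x IH].
  by rewrite big_nil (_ : [set x in [::]] = finset.set0) ?potential_set0.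
rewrite rcons_uniq => /andP [xNs s_uniq].
rewrite -cats1 big_cat big_seq1 /= cats1 preceding_rcons_last //.
rewrite (eq_big_seq (fun i => shapley_value i (preceding s i :|: [set i]))); last first.
  by move=> i si; rewrite preceding_rcons.
have setD1x : [set y in rcons s x] :\ x = [set y in s].
  apply/setP => y; rewrite in_setD1 !inE mem_rcons in_cons.
  by case: eqP => [->|]; rewrite ?(negbTE xNs).
have -> : [set y in s] :|: [set x] = [set y in rcons s x].
  by apply/setP => y; rewrite !inE mem_rcons in_cons orbC.
rewrite IH // -potentialD1 ?inE ?mem_rcons ?mem_head // setD1x.
by rewrite addrC subrK.
Qed.

Lemma potential_le_harmonic (v_leD1 : forall Y j, v (Y :\ j) <= v Y) Y :
  potential Y <= harmonic_number R #|Y| * v Y.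
Proof.
move cardY: #|Y| => n; elim: n Y cardY => [|n IH] Y cardY.
  by move/eqP: cardY; rewrite cards_eq0 => /eqP ->; rewrite potential_set0 v_set0 mulr0.
have n_gt0 : 0 < n.+1%:R :> R by rewrite ltr0n.
have := potentialE Y; rewrite cardY => recP.
have sum_le : \sum_(j in Y) potential (Y :\ j) <= \sum_(j in Y) harmonic_number R n * v Y.
  apply: ler_sum => j jY; apply: le_trans (IH _ (cardsD1_eqS jY cardY)) _.
  by apply: ler_wpM2l; [exact: harmonic_number_ge0 | exact: v_leD1].
rewrite sumr_const cardY -mulr_natl in sum_le.
rewrite -(ler_pM2l n_gt0) recP harmonic_numberS mulrDl mulrDr mulVKf ?gt_eqF //.
lra.
Qed.

Lemma potential_ge_div (d : R) : 0 < d ->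
    (forall Y, #|Y|%:R * v Y <= d * v Y + \sum_(j in Y) v (Y :\ j)) ->
  forall Y, v Y / d <= potential Y.
Proof.
move=> d_gt0 v_removal Y; move cardY: #|Y| => n.
elim: n Y cardY => [|n IH] Y cardY.
  by move/eqP: cardY; rewrite cards_eq0 => /eqP ->; rewrite potential_set0 v_set0 mul0r.
have n_gt0 : 0 < n.+1%:R :> R by rewrite ltr0n.
have := potentialE Y; rewrite cardY => recP.
have sum_ge : \sum_(j in Y) v (Y :\ j) / d <= \sum_(j in Y) potential (Y :\ j).
  by apply: ler_sum => j jY; exact: IH (cardsD1_eqS jY cardY).
rewrite -mulr_suml in sum_ge.
have dV_ge0 : 0 <= d^-1 by rewrite invr_ge0 ltW.
have := ler_wpM2r dV_ge0 (v_removal Y).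
rewrite mulrDl (mulrC d) mulfK ?gt_eqF // cardY => removal_d.
rewrite -(ler_pM2l n_gt0) recP mulrA; lra.
Qed.

End ShapleyPotential.

(* Young's inequality for [x * y ^ (a - 1)] with the conjugate exponents [a] and [a / (a - 1)]. *)
Lemma powR_tangent_le (R : realType) (a x y : R) : 1 < a -> 0 <= x -> 0 <= y ->
  y `^ a - a * (y - x) * y `^ (a - 1) <= x `^ a.
Proof.
move=> a_gt1 x_ge0 y_ge0.
have a_gt0 : 0 < a by apply: lt_trans a_gt1.
have a1_gt0 : 0 < a - 1 by rewrite subr_gt0.
have b_gt0 : 0 < a / (a - 1) by rewrite divr_gt0.
have conj : a^-1 + (a / (a - 1))^-1 = 1 by rewrite invf_div; field; rewrite gt_eqF.
have young := conjugate_powR x_ge0 (powR_ge0 y (a - 1)) a_gt0 b_gt0 conj.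
have scaled : a * (x * y `^ (a - 1)) <= x `^ a + (a - 1) * y `^ a.
  rewrite -powRrM (_ : (a - 1) * _ = a) in young; last by field; rewrite gt_eqF.
  have expand : a * (x `^ a / a + y `^ a / (a / (a - 1))) = x `^ a + (a - 1) * y `^ a.
    by field; rewrite !gt_eqF.
  by rewrite -expand ler_wpM2l // ltW.
have -> : y `^ a - a * (y - x) * y `^ (a - 1) =
          (1 - a) * y `^ a + a * (x * y `^ (a - 1)).
  by rewrite -(mulr_powRB1 y_ge0 a_gt0); ring.
lra.
Qed.

Lemma powR_sum_removal (R : realType) (I : finType) (A : {pred I}) (u : I -> R)
    (a L : R) :
  1 < a -> (forall j, j \in A -> 0 <= u j) -> \sum_(j in A) u j = L ->
  #|A|%:R * L `^ a <= a * L `^ a + \sum_(j in A) (L - u j) `^ a.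
Proof.
move=> a_gt1 u_ge0 sumA.
have L_ge0 : 0 <= L by rewrite -sumA sumr_ge0.
have tangent j : j \in A -> L `^ a - a * u j * L `^ (a - 1) <= (L - u j) `^ a.
  move=> jA; have uj_le : 0 <= L - u j.
    rewrite subr_ge0 -sumA (bigD1 j) //= lerDl.
    by apply: sumr_ge0 => i /andP [iA _]; exact: u_ge0.
  by have := powR_tangent_le a_gt1 uj_le L_ge0; rewrite subKr.
have : \sum_(j in A) (L `^ a - a * u j * L `^ (a - 1)) <= \sum_(j in A) (L - u j) `^ a.
  exact: ler_sum.
rewrite sumrB sumr_const -mulr_natl -mulr_suml -mulr_sumr.
rewrite sumA -mulrA mulr_powRB1 ?(lt_trans ltr01 a_gt1) //; lra.
Qed.

Section GNDCost.
Variables (R : realType) (E : finType) (N q : nat).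
Variables (w : 'I_N -> E -> nat) (alpha : 'I_q -> R)
          (sigma : E -> R) (xi : E -> 'I_q -> R).
Hypothesis w_ge1 : forall i e, (1 <= w i e)%N.
Hypothesis alpha_gt1 : forall k, 1 < alpha k.
Hypothesis sigma_ge0 : forall e, 0 <= sigma e.
Hypothesis xi_ge0 : forall e k, 0 <= xi e k.
Implicit Types (X Y : {set 'I_N}) (i j : 'I_N) (e : E) (p : 'I_N -> {set E}).

Local Notation F := (Fcost alpha sigma xi).

Definition resource_cost e Y : R := F e (load_of w e Y).

Definition marginal_cost e i Y : R :=
  F e (load_of w e Y + w i e) - F e (load_of w e Y).

Lemma FcostE e l : l != 0%N ->
  F e l = sigma e + \sum_(k < q) xi e k * l%:R `^ alpha k.
Proof. by rewrite /Fcost => /negbTE ->. Qed.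

Lemma Fcost_ge0 e l : 0 <= F e l.
Proof.
rewrite /Fcost; case: eqP => // _; rewrite addr_ge0 //.
by apply: sumr_ge0 => k _; rewrite mulr_ge0 ?powR_ge0.
Qed.

Lemma Fcost_le e l l' : (l <= l')%N -> F e l <= F e l'.
Proof.
have [->|l_neq0 ll'] := eqVneq l 0%N; first by rewrite /Fcost eqxx Fcost_ge0.
have l'_neq0 : l' != 0%N by rewrite -lt0n (leq_trans _ ll') // lt0n.
rewrite !FcostE // lerD2l; apply: ler_sum => k _; apply: ler_wpM2l => //.
by rewrite ge0_ler_powR ?nnegrE ?ler_nat // ltW // (lt_trans ltr01).
Qed.

Lemma load_ofD1 e Y i : i \in Y -> load_of w e Y = (load_of w e (Y :\ i) + w i e)%N.
Proof. by move=> iY; rewrite /load_of (big_setD1 i) //= addnC. Qed.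

Lemma load_of_gt0 e Y : (0 < #|Y|)%N -> (0 < load_of w e Y)%N.
Proof.
by case/card_gt0P => i iY; rewrite (load_ofD1 e iY) (leq_trans (w_ge1 i e)) ?leq_addl.
Qed.

Lemma resource_cost_set0 e : resource_cost e finset.set0 = 0.
Proof. by rewrite /resource_cost /load_of big_set0. Qed.

Lemma marginal_costE e i Y : i \in Y ->
  marginal_cost e i (Y :\ i) = resource_cost e Y - resource_cost e (Y :\ i).
Proof. by move=> iY; rewrite /marginal_cost /resource_cost -load_ofD1. Qed.

Lemma resource_cost_ge0 e Y : 0 <= resource_cost e Y.
Proof. exact: Fcost_ge0. Qed.

Lemma resource_cost_leD1 e Y j : resource_cost e (Y :\ j) <= resource_cost e Y.
Proof.
apply: Fcost_le; have [jY|jNY] := boolP (j \in Y).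
  by rewrite (load_ofD1 e jY) leq_addr.
suff -> : Y :\ j = Y by [].
by apply/setP => x; rewrite in_setD1; case: eqVneq => // ->; rewrite (negbTE jNY).
Qed.

Lemma resource_cost_removal e (d : R) : (forall k, alpha k <= d) -> 1 <= d ->
  forall Y, #|Y|%:R * resource_cost e Y <=
            d * resource_cost e Y + \sum_(j in Y) resource_cost e (Y :\ j).
Proof.
move=> alpha_le d_ge1 Y.
have sum_ge0 : 0 <= \sum_(j in Y) resource_cost e (Y :\ j).
  by apply: sumr_ge0 => j _; exact: resource_cost_ge0.
have [cardY_le1|cardY_gt1] := leqP #|Y| 1.
  have cardY_le_d : #|Y|%:R <= d by apply: le_trans d_ge1; rewrite lern1.
  have := ler_wpM2r (resource_cost_ge0 e Y) cardY_le_d; lra.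
set L : R := (load_of w e Y)%:R.
have cost_Y : resource_cost e Y = sigma e + \sum_(k < q) xi e k * L `^ alpha k.
  by rewrite /resource_cost FcostE // -lt0n load_of_gt0 // ltnW.
have cost_Yj : \sum_(j in Y) resource_cost e (Y :\ j) = #|Y|%:R * sigma e +
    \sum_(k < q) xi e k * \sum_(j in Y) (L - (w j e)%:R) `^ alpha k.
  rewrite (eq_bigr (fun j => sigma e +
      \sum_(k < q) xi e k * (L - (w j e)%:R) `^ alpha k)); last first.
    move=> j jY; rewrite /resource_cost FcostE; last first.
      by rewrite -lt0n load_of_gt0 //; move: cardY_gt1; rewrite (cardsD1 j) jY.
    by rewrite /L [load_of w e Y](load_ofD1 e jY) natrD addrK.
  rewrite big_split sumr_const mulr_natl exchange_big /=; congr (_ + _).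
  by apply: eq_bigr => k _; rewrite mulr_sumr.
have per_exponent k : #|Y|%:R * L `^ alpha k <=
    d * L `^ alpha k + \sum_(j in Y) (L - (w j e)%:R) `^ alpha k.
  have w_ge0 j : j \in Y -> 0 <= (w j e)%:R :> R by rewrite ler0n.
  have sumY : \sum_(j in Y) (w j e)%:R = L by rewrite /L /load_of natr_sum.
  apply: le_trans (powR_sum_removal (alpha_gt1 k) w_ge0 sumY) _.
  by rewrite lerD2r ler_wpM2r ?powR_ge0.
have weighted : #|Y|%:R * \sum_(k < q) xi e k * L `^ alpha k <=
    d * \sum_(k < q) xi e k * L `^ alpha k +
    \sum_(k < q) xi e k * \sum_(j in Y) (L - (w j e)%:R) `^ alpha k.
  rewrite mulr_sumr [d * _]mulr_sumr -big_split; apply: ler_sum => k _.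
  by rewrite /= mulrCA (mulrCA d) -mulrDr ler_wpM2l.
have : 0 <= d * sigma e by rewrite mulr_ge0 // (le_trans ler01 d_ge1).
rewrite cost_Y cost_Yj !mulrDr; lra.
Qed.

Lemma Phi_sum_potential p psi :
    (forall e, perm_eq (psi e) (enum (users p e))) ->
  Phi w alpha sigma xi p psi =
  \sum_(e in \bigcup_(i < N) p i) potential (resource_cost e) (users p e).
Proof.
move=> psi_perm; apply: eq_bigr => e _.
rewrite -big_enum /= -(perm_big _ (psi_perm e)) /=.
rewrite (sum_shapley_value_preceding (resource_cost_set0 e) (@marginal_costE e)).
  congr (potential _ _); apply/setP => i.
  by rewrite inE (perm_mem (psi_perm e)) mem_enum.
by rewrite (perm_uniq (psi_perm e)) enum_uniq.
Qed.

Lemma total_cost_sum_used p : total_cost w alpha sigma xi p =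
  \sum_(e in \bigcup_(i < N) p i) resource_cost e (users p e).
Proof.
rewrite /total_cost (bigID (mem (\bigcup_(i < N) p i))) /= addrC big1 ?add0r //.
move=> e e_unused; rewrite /load (_ : users p e = finset.set0).
  exact: resource_cost_set0.
apply/setP => i; rewrite !inE; apply: contraNF e_unused => e_pi.
by apply/bigcupP; exists i.
Qed.

End GNDCost.

Theorem theorem7p2 (R : realType) (E : finType) (N : nat)
  (P : 'I_N -> {set {set E}}) (w : 'I_N -> E -> nat)
  (q : nat) (alpha : 'I_q -> R) (sigma : E -> R) (xi : E -> 'I_q -> R)
  (hw : forall i e, (1 <= w i e)%N)
  (hq : (1 <= q)%N)
  (halpha : forall j, 1 < alpha j)
  (hsigma : forall e, 0 <= sigma e)
  (hxi : forall e j, 0 <= xi e j)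
  (hxipos : forall e, exists j, 0 < xi e j)
  (p : 'I_N -> {set E}) (hp : forall i, p i \in P i)
  (psi : E -> seq 'I_N)
  (hpsi : forall e, perm_eq (psi e) (enum (users p e))) :
  let amax := \big[Num.max/0]_(j < q) alpha j in
  let C := total_cost w alpha sigma xi p in
  let Ph := Phi w alpha sigma xi p psi in
  ((Num.ceil amax)%:~R)^-1 * C <= Ph /\ Ph <= harmonic_number R N * C.
Proof.
move=> amax C Ph; set d : R := (Num.ceil amax)%:~R.
have alpha_le_d k : alpha k <= d.
  by apply: le_trans (ceil_ge _); exact: (le_bigmax (0 : R) alpha k).
have d_ge1 : 1 <= d by apply/ltW/(lt_le_trans (halpha (Ordinal hq))).
have d_gt0 : 0 < d by apply: lt_le_trans d_ge1.
rewrite /Ph /C Phi_sum_potential // total_cost_sum_used !mulr_sumr.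
split; apply: ler_sum => e _.
  rewrite mulrC; apply: potential_ge_div d_gt0 _ _ => //.
    exact: resource_cost_set0.
  exact: resource_cost_removal.
apply: le_trans (potential_le_harmonic _ _ _) _.
- exact: resource_cost_set0.
- exact: resource_cost_leD1.
apply: ler_wpM2r; first exact: resource_cost_ge0.
by apply/harmonic_number_le/(leq_trans (max_card _)); rewrite card_ord.
Qed.
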